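(* There exists a snowflaking function $h$ such that for every $n\in\mathbb N$ there is a metric space $(X_n,d_n)$ of cardinality $n$ for which $(X_n,h\circ d_n)$ admits an isometric embedding into the $2$-dimensional Euclidean space $\mathbb R^2$. In particular, no bound depending only on $h$ and the dimension can hold on the cardinality of a metric space whose $h$-snowflake embeds isometrically into a finite-dimensional normed space.
   Context: Let $\mathbb R_{\geq}=[0,\infty)$. A function $h:\mathbb R_{\geq}\to\mathbb R_{\geq}$ is called a snowflaking function if: (S1) $h(0)=0$; (S2) $h$ is concave; (S3) $h(t)/t\to\infty$ as $t\to0^+$; (S4) $h(t)/t\to 0$ as $t\to\infty$. For such $h$ and a metric $d$ on $X$, $h\circ d$ is again a metric on $X$; $(X,h\circ d)$ is called the $h$-snowflake of $(X,d)$. *)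

From Stdlib Require Import Reals Lra.
Open Scope R_scope.

(* Snowflaking function h : [0,oo) -> [0,oo), represented as h : R -> R
   whose behaviour is only constrained on [0,oo). *)
Definition concave_on_nonneg (h : R -> R) : Prop :=
  forall x y t, 0 <= x -> 0 <= y -> 0 <= t <= 1 ->
    t * h x + (1 - t) * h y <= h (t * x + (1 - t) * y).

Definition snowflaking (h : R -> R) : Prop :=
  (forall t, 0 <= t -> 0 <= h t) /\
  h 0 = 0 /\
  concave_on_nonneg h /\
  (forall M, exists delta, 0 < delta /\
     forall t, 0 < t < delta -> M < h t / t) /\
  (forall eps, 0 < eps -> exists T, 0 < T /\
     forall t, T < t -> Rabs (h t / t) < eps).

Definition is_metric (X : Type) (d : X -> X -> R) : Prop :=
  (forall x y, 0 <= d x y) /\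
  (forall x y, d x y = 0 <-> x = y) /\
  (forall x y, d x y = d y x) /\
  (forall x y z, d x z <= d x y + d y z).

Definition euclid2 (p q : R * R) : R :=
  sqrt ((fst p - fst q) ^ 2 + (snd p - snd q) ^ 2).

Definition fin (n : nat) : Type := { i : nat | (i < n)%nat }.

From Stdlib Require Import Reals Lra Lia Arith ClassicalDescription.
From Coquelicot Require Import Rcomplements Rbar Lub.
Open Scope R_scope.

(* The snowflaking function is the infimum [h] of lines [t / (m + 1) + beta_m] with very
   fast growing intercepts: it is concave, at least 1 for t > 0 and eventually below any
   line of positive slope, and on a window of values it coincides with the n-th line.
   For [X_n] take n lattice points on a dilated parabola whose distances [D] fall in that
   window.  Strict convexity of the parabola makes every triangle inequality between them
   hold with slack at least [beta_n], so [d := (n + 1) (D - beta_n)] is still a metric,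
   and [h (d x y)] is the value of the n-th line at [d x y], namely [D x y]. *)

Section InfimumOfAffine.

Variables alpha beta : nat -> R.
Hypothesis alpha_pos : forall m, 0 < alpha m.
Hypothesis alpha_small : forall eps, 0 < eps -> exists m, alpha m < eps.
Hypothesis beta_ge1 : forall m, 1 <= beta m.

Definition affine m t := alpha m * t + beta m.

Definition inf_affine t := real (Glb_Rbar (fun y => exists m, y = affine m t)).

Definition snowflake_of_affine t := if Rle_dec t 0 then 0 else inf_affine t.

Local Notation h := snowflake_of_affine.

Lemma affine_ge1 m t : 0 <= t -> 1 <= affine m t.
Proof. intros Ht; unfold affine; pose proof (alpha_pos m); pose proof (beta_ge1 m); nra. Qed.

Lemma inf_affine_spec t : 0 <= t ->
  (forall m, inf_affine t <= affine m t) /\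
  (forall w, (forall m, w <= affine m t) -> w <= inf_affine t).
Proof.
  intros Ht; unfold inf_affine.
  destruct (Glb_Rbar_correct (fun y => exists m, y = affine m t)) as [Hlb Hglb].
  assert (Hge0 : Rbar_le 0 (Glb_Rbar (fun y => exists m, y = affine m t))).
  { apply Hglb; intros _ [m ->]; simpl; pose proof (affine_ge1 m t Ht); lra. }
  assert (Hle : Rbar_le (Glb_Rbar (fun y => exists m, y = affine m t)) (affine 0 t)).
  { apply Hlb; exists 0%nat; reflexivity. }
  destruct (Glb_Rbar _) as [g| |]; simpl in *; try contradiction.
  split.
  - intros m; exact (Hlb _ (ex_intro _ m eq_refl)).
  - intros w Hw; apply (Hglb (Finite w)); intros _ [m ->]; apply Hw.
Qed.

Lemma snowflake_le_affine m t : 0 <= t -> h t <= affine m t.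
Proof.
  intros Ht; unfold h; destruct (Rle_dec t 0).
  - pose proof (affine_ge1 m t Ht); lra.
  - exact (proj1 (inf_affine_spec t Ht) m).
Qed.

Lemma snowflake_ge_lower_bound w t : 0 < t ->
  (forall m, w <= affine m t) -> w <= h t.
Proof.
  intros Ht Hw; unfold h; destruct (Rle_dec t 0); [lra|].
  exact (proj2 (inf_affine_spec t (Rlt_le _ _ Ht)) w Hw).
Qed.

Lemma snowflake_ge1 t : 0 < t -> 1 <= h t.
Proof. intros Ht; apply snowflake_ge_lower_bound; [exact Ht|]; intros m; apply affine_ge1; lra. Qed.

Lemma snowflake_0 : h 0 = 0.
Proof. unfold h; destruct (Rle_dec 0 0); lra. Qed.

Lemma snowflake_eq_affine n t : 0 < t ->
  (forall m, affine n t <= affine m t) -> h t = affine n t.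
Proof.
  intros Ht Hmin; apply Rle_antisym.
  - apply snowflake_le_affine; lra.
  - exact (snowflake_ge_lower_bound _ _ Ht Hmin).
Qed.

Lemma scale_snowflake_eq0 s x : s * x = 0 -> s * h x = 0.
Proof. intros E; destruct (Rmult_integral _ _ E) as [-> | ->]; [ring | rewrite snowflake_0; ring]. Qed.

Lemma snowflake_concave : concave_on_nonneg h.
Proof.
  intros x y t Hx Hy Ht.
  set (z := t * x + (1 - t) * y).
  destruct (Rle_dec z 0) as [Hz | Hz].
  - assert (Hxt : t * x = 0) by (unfold z in Hz; nra).
    assert (Hyt : (1 - t) * y = 0) by (unfold z in Hz; nra).
    rewrite (scale_snowflake_eq0 _ _ Hxt), (scale_snowflake_eq0 _ _ Hyt).
    replace z with 0 by (unfold z; lra); rewrite snowflake_0; lra.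
  - apply snowflake_ge_lower_bound; [lra|]; intros m.
    replace (affine m z) with (t * affine m x + (1 - t) * affine m y) by (unfold affine, z; ring).
    pose proof (snowflake_le_affine m x Hx); pose proof (snowflake_le_affine m y Hy); nra.
Qed.

Lemma snowflake_of_affine_snowflaking : snowflaking h.
Proof.
  split; [|split; [exact snowflake_0 | split; [exact snowflake_concave | split]]].
  - intros t Ht; destruct (Req_dec t 0) as [-> | Hnz].
    + rewrite snowflake_0; lra.
    + pose proof (snowflake_ge1 t ltac:(lra)); lra.
  - intros M; exists (/ (Rabs M + 1)); split.
    + apply Rinv_0_lt_compat; pose proof (Rabs_pos M); lra.
    + intros t [Ht Htd]; pose proof (snowflake_ge1 t Ht); pose proof (Rle_abs M).
      assert (Hinv : Rabs M + 1 < / t).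
      { rewrite <- (Rinv_inv (Rabs M + 1)); apply Rinv_lt_contravar; [|exact Htd].
        apply Rmult_lt_0_compat; [lra|]; apply Rinv_0_lt_compat; pose proof (Rabs_pos M); lra. }
      assert (/ t <= h t / t) by (unfold Rdiv; pose proof (Rinv_0_lt_compat t Ht); nra).
      lra.
  - intros eps Heps; destruct (alpha_small (eps / 2)) as [m Hm]; [lra|].
    pose proof (beta_ge1 m); pose proof (alpha_pos m).
    exists (2 * beta m / eps); split; [apply Rdiv_lt_0_compat; lra|].
    intros t Ht.
    assert (Htpos : 0 < t) by (assert (0 < 2 * beta m / eps) by (apply Rdiv_lt_0_compat; lra); lra).
    assert (Hbeta : beta m < eps / 2 * t).
    { assert (2 * beta m / eps * eps = 2 * beta m) by (field; lra); nra. }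
    pose proof (snowflake_ge1 t Htpos); pose proof (snowflake_le_affine m t ltac:(lra)).
    unfold affine in *.
    rewrite Rabs_right by (apply Rle_ge; unfold Rdiv; pose proof (Rinv_0_lt_compat t Htpos); nra).
    apply (Rmult_lt_reg_r t); [exact Htpos|].
    unfold Rdiv; rewrite Rmult_assoc, Rinv_l, Rmult_1_r by lra; nra.
Qed.

End InfimumOfAffine.

Definition cross (p q r : R * R) : R :=
  (fst p - fst q) * (snd r - snd q) - (snd p - snd q) * (fst r - fst q).

Lemma euclid2_nonneg p q : 0 <= euclid2 p q.
Proof. apply sqrt_pos. Qed.

Lemma euclid2_sq p q : euclid2 p q ^ 2 = (fst p - fst q) ^ 2 + (snd p - snd q) ^ 2.
Proof. apply pow2_sqrt; apply Rplus_le_le_0_compat; apply pow2_ge_0. Qed.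

Lemma euclid2_sym p q : euclid2 p q = euclid2 q p.
Proof. unfold euclid2; f_equal; ring. Qed.

Lemma euclid2_refl p : euclid2 p p = 0.
Proof. unfold euclid2; replace (_ + _) with 0 by ring; apply sqrt_0. Qed.

Lemma sum_sub_ge_of_sq_gap a b c L e : 0 <= a -> 0 <= b -> 0 <= c ->
  a <= L -> b <= L -> c <= L -> 0 < e -> e <= (a + b) ^ 2 - c ^ 2 ->
  e / (3 * L) <= a + b - c.
Proof.
  intros Ha Hb Hc HaL HbL HcL He Hgap.
  assert (HL : 0 < L) by nra.
  assert (Hpos : 0 <= a + b - c) by nra.
  apply Rle_div_l; [lra|]; nra.
Qed.

(* With [u = p - q], [v = r - q], [a = |u|], [b = |v|], [c = |u - v|]:
   [(a + b)^2 - c^2 = 2 (a b + u.v)] and, by Lagrange's identity,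
   [(a b + u.v) (a b - u.v) = cross p q r ^ 2]. *)
Lemma euclid2_triangle_gap p q r K L : 0 < K -> K <= cross p q r ^ 2 ->
  euclid2 p q <= L -> euclid2 q r <= L -> euclid2 p r <= L ->
  euclid2 p r + K / (3 * L ^ 3) <= euclid2 p q + euclid2 q r.
Proof.
  intros HK Hcross Ha Hb Hc.
  pose proof (euclid2_sq p q) as Ea; pose proof (euclid2_sq q r) as Eb;
    pose proof (euclid2_sq p r) as Ec.
  pose proof (euclid2_nonneg p q) as Ha0; pose proof (euclid2_nonneg q r) as Hb0;
    pose proof (euclid2_nonneg p r) as Hc0.
  set (a := euclid2 p q) in *; set (b := euclid2 q r) in *; set (c := euclid2 p r) in *.
  set (dot := (fst p - fst q) * (fst r - fst q) + (snd p - snd q) * (snd r - snd q)).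
  assert (Hlagrange : (a * b) ^ 2 = dot ^ 2 + cross p q r ^ 2).
  { rewrite Rpow_mult_distr, Ea, Eb; unfold dot, cross; ring. }
  assert (Hcos : (a + b) ^ 2 - c ^ 2 = 2 * (a * b + dot)).
  { replace ((a + b) ^ 2 - c ^ 2) with (a ^ 2 + b ^ 2 - c ^ 2 + 2 * (a * b)) by ring.
    rewrite Ea, Eb, Ec; unfold dot; ring. }
  assert (HL : 0 < L).
  { destruct (Rle_lt_or_eq_dec 0 a Ha0) as [Hapos | Ea0]; [lra|].
    rewrite <- Ea0 in Hlagrange; nra. }
  assert (Hab0 : 0 <= a * b) by (apply Rmult_le_pos; lra).
  assert (Hdot : - dot <= a * b /\ dot <= a * b).
  { assert (dot ^ 2 <= (a * b) ^ 2) by (pose proof (pow2_ge_0 (cross p q r)); lra).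
    split; nra. }
  assert (Hprod : (a * b + dot) * (a * b - dot) = cross p q r ^ 2) by nra.
  assert (Hsum : K / L ^ 2 <= 2 * (a * b + dot)).
  { apply Rle_div_l; [apply pow_lt; lra|].
    assert (a * b <= L ^ 2) by (apply Rle_trans with (a * L); nra).
    assert (a * b - dot <= 2 * L ^ 2) by lra.
    assert (0 <= a * b + dot) by lra.
    nra. }
  replace (K / (3 * L ^ 3)) with (K / L ^ 2 / (3 * L)) by (field; lra).
  enough (K / L ^ 2 / (3 * L) <= a + b - c) by lra.
  apply sum_sub_ge_of_sq_gap; try assumption; [|lra].
  apply Rdiv_lt_0_compat; [lra | apply pow_lt; lra].
Qed.

Definition dilate (l : R) (p : R * R) : R * R := (l * fst p, l * snd p).

Lemma euclid2_dilate l p q : 0 <= l -> euclid2 (dilate l p) (dilate l q) = l * euclid2 p q.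
Proof.
  intros Hl; unfold euclid2, dilate; cbn [fst snd].
  replace ((l * fst p - l * fst q) ^ 2 + (l * snd p - l * snd q) ^ 2)
    with (l ^ 2 * ((fst p - fst q) ^ 2 + (snd p - snd q) ^ 2)) by ring.
  rewrite sqrt_mult_alt, sqrt_pow2 by (try apply pow2_ge_0; lra); reflexivity.
Qed.

Definition parabola (i : nat) : R * R := (INR i, INR i ^ 2).

Definition diam (n : nat) : R := (INR n + 1) ^ 2.

Lemma INR_sub_sq_ge1 i j : i <> j -> 1 <= (INR i - INR j) ^ 2.
Proof.
  intros Hij; destruct (Nat.lt_gt_cases i j) as [[Hlt | Hlt] _]; [exact Hij | |];
    apply le_INR in Hlt; rewrite S_INR in Hlt; nra.
Qed.

Lemma parabola_cross i j k :
  cross (parabola i) (parabola j) (parabola k) = (INR i - INR j) * (INR k - INR j) * (INR k - INR i).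
Proof. unfold cross, parabola; cbn [fst snd]; ring. Qed.

Lemma parabola_dist_ge1 i j : i <> j -> 1 <= euclid2 (parabola i) (parabola j).
Proof.
  intros Hij; rewrite <- sqrt_1; apply sqrt_le_1_alt; unfold parabola; cbn [fst snd].
  pose proof (INR_sub_sq_ge1 _ _ Hij); pose proof (pow2_ge_0 (INR i ^ 2 - INR j ^ 2)); lra.
Qed.

Lemma parabola_dist_le n i j : (i <= n)%nat -> (j <= n)%nat ->
  euclid2 (parabola i) (parabola j) <= diam n.
Proof.
  intros Hi Hj; apply le_INR in Hi, Hj; pose proof (pos_INR i); pose proof (pos_INR j).
  unfold diam; rewrite <- (sqrt_pow2 ((INR n + 1) ^ 2)) by apply pow2_ge_0.
  apply sqrt_le_1_alt; unfold parabola; cbn [fst snd].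
  set (x := INR i) in *; set (y := INR j) in *; set (r := INR n) in *.
  assert ((x - y) ^ 2 <= r ^ 2) by nra.
  assert ((x ^ 2 - y ^ 2) ^ 2 <= (r ^ 2) ^ 2).
  { assert (0 <= x ^ 2 <= r ^ 2) by nra; assert (0 <= y ^ 2 <= r ^ 2) by nra; nra. }
  nra.
Qed.

(* Three distinct lattice points of the parabola span a triangle of doubled area
   [|(i - j) (k - j) (k - i)| >= 1]. *)
Lemma parabola_triangle_gap n i j k : i <> j -> j <> k -> i <> k ->
  (i <= n)%nat -> (j <= n)%nat -> (k <= n)%nat ->
  euclid2 (parabola i) (parabola k) + 1 / (3 * diam n ^ 3) <=
  euclid2 (parabola i) (parabola j) + euclid2 (parabola j) (parabola k).
Proof.
  intros Hij Hjk Hik Hi Hj Hk; apply euclid2_triangle_gap; [lra | | now apply parabola_dist_le ..].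
  rewrite parabola_cross, !Rpow_mult_distr.
  pose proof (INR_sub_sq_ge1 i j Hij); pose proof (INR_sub_sq_ge1 k j (not_eq_sym Hjk));
    pose proof (INR_sub_sq_ge1 k i (not_eq_sym Hik)).
  assert (1 <= (INR i - INR j) ^ 2 * (INR k - INR j) ^ 2) by nra.
  nra.
Qed.

Section AffineRescaling.

Variables (X : Type) (D : X -> X -> R) (a b : R).
Hypothesis a_pos : 0 < a.
Hypothesis D_sym : forall x y, D x y = D y x.
Hypothesis D_gt : forall x y, x <> y -> b < D x y.
Hypothesis D_gap : forall x y z, x <> y -> y <> z -> x <> z -> D x z + b <= D x y + D y z.

Definition rescaled (x y : X) : R :=
  if excluded_middle_informative (x = y) then 0 else (D x y - b) / a.

Lemma rescaled_diag x : rescaled x x = 0.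
Proof. unfold rescaled; destruct (excluded_middle_informative (x = x)); congruence. Qed.

Lemma rescaled_off_diag x y : x <> y -> rescaled x y = (D x y - b) / a.
Proof. intros Hxy; unfold rescaled; destruct (excluded_middle_informative (x = y)); congruence. Qed.

Lemma rescaled_pos x y : x <> y -> 0 < rescaled x y.
Proof.
  intros Hxy; rewrite rescaled_off_diag by exact Hxy.
  apply Rdiv_lt_0_compat; [pose proof (D_gt x y Hxy) |]; lra.
Qed.

Lemma rescaled_affine x y : x <> y -> a * rescaled x y + b = D x y.
Proof. intros Hxy; rewrite rescaled_off_diag by exact Hxy; field; lra. Qed.

Lemma rescaled_metric : is_metric X rescaled.
Proof.
  assert (Hnonneg : forall x y, 0 <= rescaled x y).
  { intros x y; destruct (excluded_middle_informative (x = y)) as [-> | Hxy].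
    - rewrite rescaled_diag; lra.
    - left; exact (rescaled_pos x y Hxy). }
  split; [exact Hnonneg | split; [| split]].
  - intros x y; split; [| intros ->; apply rescaled_diag].
    intros E; destruct (excluded_middle_informative (x = y)) as [| Hxy]; [assumption|].
    pose proof (rescaled_pos x y Hxy); lra.
  - intros x y; destruct (excluded_middle_informative (x = y)) as [-> | Hxy]; [reflexivity|].
    rewrite !rescaled_off_diag, D_sym by congruence; reflexivity.
  - intros x y z.
    destruct (excluded_middle_informative (x = y)) as [-> | Hxy];
      [rewrite rescaled_diag; lra|].
    destruct (excluded_middle_informative (y = z)) as [-> | Hyz];
      [rewrite rescaled_diag; lra|].
    destruct (excluded_middle_informative (x = z)) as [-> | Hxz];
      [rewrite rescaled_diag; pose proof (Hnonneg z y); pose proof (Hnonneg y z); lra|].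
    rewrite !rescaled_off_diag by assumption.
    pose proof (D_gap x y z Hxy Hyz Hxz).
    apply Rmult_le_reg_r with a; [exact a_pos|].
    unfold Rdiv; rewrite Rmult_plus_distr_r, !Rmult_assoc, Rinv_l, !Rmult_1_r by lra; lra.
Qed.

End AffineRescaling.

Fixpoint intercept (n : nat) : R :=
  match n with
  | O => 1
  | S k => 3 * diam k ^ 4 * intercept k
  end.

Definition slope (m : nat) : R := / (INR m + 1).

(* Chosen so that dilating by [zoom n] turns the parabola's slack [1 / (3 diam n ^ 3)]
   into exactly [intercept n]. *)
Definition zoom (n : nat) : R := 3 * diam n ^ 3 * intercept n.

Definition h : R -> R := snowflake_of_affine slope intercept.

Definition config (n : nat) (x : fin n) : R * R := dilate (zoom n) (parabola (proj1_sig x)).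

Definition config_dist (n : nat) (x y : fin n) : R := euclid2 (config n x) (config n y).

Lemma diam_ge1 n : 1 <= diam n.
Proof. unfold diam; pose proof (pos_INR n); nra. Qed.

Lemma intercept_ge1 n : 1 <= intercept n.
Proof.
  induction n as [| n IH]; simpl; [lra|].
  pose proof (diam_ge1 n); pose proof (pow_R1_Rle (diam n) 4 ltac:(lra)); nra.
Qed.

Lemma intercept_S n : intercept (S n) = zoom n * diam n.
Proof. unfold zoom; simpl; ring. Qed.

Lemma intercept_le n m : (n <= m)%nat -> intercept n <= intercept m.
Proof.
  induction 1 as [| m _ IH]; [lra|].
  rewrite intercept_S; unfold zoom; pose proof (diam_ge1 m); pose proof (intercept_ge1 m).
  pose proof (pow_R1_Rle (diam m) 4 ltac:(lra)); simpl in *; nra.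
Qed.

Lemma zoom_ge n : (INR n + 1) * intercept n <= zoom n.
Proof.
  unfold zoom, diam; pose proof (pos_INR n); pose proof (intercept_ge1 n).
  pose proof (pow_R1_Rle (INR n + 1) 5 ltac:(lra)).
  replace (3 * ((INR n + 1) ^ 2) ^ 3 * intercept n)
    with (3 * (INR n + 1) ^ 5 * ((INR n + 1) * intercept n)) by ring.
  assert (0 <= (INR n + 1) * intercept n) by nra; nra.
Qed.

Lemma intercept_lt_zoom n : intercept n < zoom n.
Proof.
  unfold zoom; pose proof (diam_ge1 n); pose proof (intercept_ge1 n).
  pose proof (pow_R1_Rle (diam n) 3 ltac:(lra)); nra.
Qed.

Lemma zoom_pos n : 0 < zoom n.
Proof. pose proof (intercept_lt_zoom n); pose proof (intercept_ge1 n); lra. Qed.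

Lemma slope_pos m : 0 < slope m.
Proof. unfold slope; apply Rinv_0_lt_compat; pose proof (pos_INR m); lra. Qed.

Lemma slope_small eps : 0 < eps -> exists m, slope m < eps.
Proof.
  intros Heps; destruct (INR_unbounded (/ eps)) as [m Hm]; exists m; unfold slope.
  rewrite <- (Rinv_inv eps); apply Rinv_lt_contravar; [| lra].
  apply Rmult_lt_0_compat; [apply Rinv_0_lt_compat |]; pose proof (pos_INR m); lra.
Qed.

(* On the window [zoom n, zoom n * diam n] of values, the [n]-th line is the lowest:
   earlier lines are steeper and [zoom n] is large, later ones start above the window. *)
Lemma affine_min_window n t : 0 <= t ->
  zoom n <= affine slope intercept n t <= zoom n * diam n ->
  forall m, affine slope intercept n t <= affine slope intercept m t.
Proof.
  intros Ht [Hlo Hhi] m; unfold affine, slope in *.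
  pose proof (zoom_ge n); pose proof (intercept_ge1 n); pose proof (intercept_ge1 m).
  destruct (Nat.lt_total m n) as [Hmn | [-> | Hnm]]; [| lra |].
  - apply le_INR in Hmn; rewrite S_INR in Hmn.
    assert (Hp : 0 < INR m + 1) by (pose proof (pos_INR m); lra).
    assert (Hpq : INR m + 1 + 1 <= INR n + 1) by lra.
    set (p := INR m + 1) in *; set (q := INR n + 1) in *.
    assert (Ht' : q * (q - 1) * intercept n <= t).
    { replace t with ((/ q * t + intercept n - intercept n) * q) by (field; lra); nra. }
    enough (/ q * t + intercept n <= / p * t) by lra.
    apply Rmult_le_reg_l with (p * q); [nra|].
    replace (p * q * (/ q * t + intercept n)) with (p * t + p * q * intercept n) by (field; lra).
    replace (p * q * (/ p * t)) with (q * t) by (field; lra).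
    assert (t <= (q - p) * t) by nra.
    assert (p * q <= q * (q - 1)) by nra.
    assert (p * q * intercept n <= q * (q - 1) * intercept n)
      by (apply Rmult_le_compat_r; lra).
    lra.
  - pose proof (intercept_le (S n) m Hnm); rewrite intercept_S in *.
    pose proof (slope_pos m); unfold slope in *; nra.
Qed.

Lemma fin_val_neq n (x y : fin n) : x <> y -> proj1_sig x <> proj1_sig y.
Proof. intros Hxy E; apply Hxy, eq_sig_hprop; [intros; apply le_unique | exact E]. Qed.

Lemma fin_val_le n (x : fin n) : (proj1_sig x <= n)%nat.
Proof. destruct x as [i Hi]; simpl; lia. Qed.

Lemma config_dist_eq n x y : config_dist n x y =
  zoom n * euclid2 (parabola (proj1_sig x)) (parabola (proj1_sig y)).
Proof. apply euclid2_dilate; left; apply zoom_pos. Qed.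

Lemma config_dist_bounds n (x y : fin n) : x <> y ->
  zoom n <= config_dist n x y <= zoom n * diam n.
Proof.
  intros Hxy; rewrite config_dist_eq.
  pose proof (parabola_dist_ge1 _ _ (fin_val_neq n x y Hxy)).
  pose proof (parabola_dist_le n _ _ (fin_val_le n x) (fin_val_le n y)).
  pose proof (zoom_pos n); split; nra.
Qed.

Lemma config_gap n (x y z : fin n) : x <> y -> y <> z -> x <> z ->
  config_dist n x z + intercept n <= config_dist n x y + config_dist n y z.
Proof.
  intros Hxy Hyz Hxz; rewrite !config_dist_eq.
  pose proof (parabola_triangle_gap n _ _ _ (fin_val_neq n x y Hxy) (fin_val_neq n y z Hyz)
    (fin_val_neq n x z Hxz) (fin_val_le n x) (fin_val_le n y) (fin_val_le n z)).
  replace (intercept n) with (zoom n * (1 / (3 * diam n ^ 3)))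
    by (unfold zoom; field; pose proof (diam_ge1 n); lra).
  pose proof (zoom_pos n); nra.
Qed.

Definition config_metric (n : nat) : fin n -> fin n -> R :=
  rescaled _ (config_dist n) (slope n) (intercept n).

Lemma intercept_lt_config_dist n (x y : fin n) : x <> y -> intercept n < config_dist n x y.
Proof.
  intros Hxy; pose proof (config_dist_bounds n x y Hxy); pose proof (intercept_lt_zoom n); lra.
Qed.

Lemma config_metric_is_metric n : is_metric (fin n) (config_metric n).
Proof.
  apply rescaled_metric;
    [apply slope_pos | intros; apply euclid2_sym | exact (intercept_lt_config_dist n) |].
  intros x y z; apply config_gap.
Qed.

Lemma h_config_metric n (x y : fin n) : h (config_metric n x y) = config_dist n x y.
Proof.
  destruct (excluded_middle_informative (x = y)) as [-> | Hxy].
  { unfold config_metric, config_dist; rewrite rescaled_diag, euclid2_refl; apply snowflake_0. }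
  pose proof (rescaled_affine _ (config_dist n) _ (intercept n) (slope_pos n) x y Hxy) as Hline.
  pose proof (rescaled_pos _ _ _ _ (slope_pos n) (intercept_lt_config_dist n) x y Hxy) as Hpos.
  fold (config_metric n) in Hline, Hpos; set (t := config_metric n x y) in *.
  assert (Hmin : forall m, affine slope intercept n t <= affine slope intercept m t).
  { apply affine_min_window; [lra|]; unfold affine; rewrite Hline.
    exact (config_dist_bounds n x y Hxy). }
  unfold h; rewrite (snowflake_eq_affine _ _ slope_pos intercept_ge1 n t Hpos Hmin).
  exact Hline.
Qed.

Theorem mainTheorem10 :
  exists h : R -> R, snowflaking h /\
    forall n : nat, exists d : fin n -> fin n -> R,
      is_metric (fin n) d /\
      exists f : fin n -> R * R,
        forall x y : fin n, euclid2 (f x) (f y) = h (d x y).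
Proof.
  exists h; split.
  - apply snowflake_of_affine_snowflaking; [exact slope_pos | exact slope_small | exact intercept_ge1].
  - intros n; exists (config_metric n); split; [apply config_metric_is_metric|].
    exists (config n); intros x y; rewrite h_config_metric; reflexivity.
Qed.
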